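(* Let $X$ be a normed space and let $Y$ be a real vector space ordered by a convex pointed cone $K$. Let $\alpha:\mathbb{R}_+\to\mathbb{R}_+$ be nondecreasing with $\lim_{t\to0^+}\alpha(t)/t=0$. Let $A\subset X$ be convex, $k_0\in K\setminus\{0\}$, and let $F:X\to Y$ be strongly $\alpha(\cdot)$-$k_0$ paraconvex on $A$ with constant $C\ge0$. Let $x_0\in A$, $h\in X$ with $\|h\|=1$, and $t_0\in\mathbb{R}$. For $t>t_0$ with $x_0+t_0h,\,x_0+th\in A$ define $$\phi(t):=\frac{F(x_0+th)-F(x_0+t_0h)}{t-t_0}+C\,\frac{\alpha(t-t_0)}{t-t_0}\,k_0.$$ Then for all $t_0<t_1<t$ with $x_0+t_0h,\,x_0+th\in A$ we have $$\phi(t)-\phi(t_1)+C\,\frac{\alpha(t_1-t_0)}{t_1-t_0}\,k_0\in K.$$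
   Context: A cone $K$ is pointed if $K\cap(-K)=\{0\}$. For a convex cone $K\subset Y$, write $x\le_K y$ iff $y-x\in K$. A mapping $F:X\to Y$ is strongly $\alpha(\cdot)$-$k_0$ paraconvex on a convex set $A\subset X$ with constant $C\ge0$ (where $k_0\in K$) if for all $x_1,x_2\in A$ and all $\lambda\in[0,1]$, $$F(\lambda x_1+(1-\lambda)x_2)\le_K \lambda F(x_1)+(1-\lambda)F(x_2)+C\min\{\lambda,1-\lambda\}\,\alpha(\|x_1-x_2\|)\,k_0.$$ *)

(* the scalar field is an arbitrary real field R
   (this contains the case of the reals; the statement is purely algebraic
   apart from the limit hypothesis, stated in epsilon-delta form). *)
From HB Require Import structures.
From mathcomp Require Import all_boot all_order all_algebra.
Set Implicit Arguments. Unset Strict Implicit. Unset Printing Implicit Defensive.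
Import Order.TTheory GRing.Theory Num.Theory.
Local Open Scope ring_scope.

Definition is_norm (R : realFieldType) (X : lmodType R) (N : X -> R) : Prop :=
  [/\ forall x, N x = 0 -> x = 0,
      forall (a : R) x, N (a *: x) = `|a| * N x
    & forall x y, N (x + y) <= N x + N y].

Definition convex_set (R : realFieldType) (V : lmodType R) (A : V -> Prop) : Prop :=
  forall x y (l : R), A x -> A y -> 0 <= l <= 1 -> A (l *: x + (1 - l) *: y).

Definition is_cone (R : realFieldType) (V : lmodType R) (K : V -> Prop) : Prop :=
  forall (l : R) k, 0 < l -> K k -> K (l *: k).

Definition pointed (R : realFieldType) (V : lmodType R) (K : V -> Prop) : Prop :=
  forall y, (K y /\ K (- y)) <-> y = 0.

Definition cone_le (R : realFieldType) (V : lmodType R) (K : V -> Prop) (x y : V) : Prop :=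
  K (y - x).

Definition strongly_paraconvex (R : realFieldType) (X Y : lmodType R)
  (N : X -> R) (K : Y -> Prop) (alpha : R -> R) (k0 : Y) (C : R)
  (A : X -> Prop) (F : X -> Y) : Prop :=
  forall x1 x2 (l : R), A x1 -> A x2 -> 0 <= l <= 1 ->
    cone_le K (F (l *: x1 + (1 - l) *: x2))
      (l *: F x1 + (1 - l) *: F x2
       + (C * Num.min l (1 - l) * alpha (N (x1 - x2))) *: k0).

Definition phi (R : realFieldType) (X Y : lmodType R)
  (alpha : R -> R) (k0 : Y) (C : R) (F : X -> Y) (x0 h : X) (t0 t : R) : Y :=
  (t - t0)^-1 *: (F (x0 + t *: h) - F (x0 + t0 *: h))
  + (C * (alpha (t - t0) / (t - t0))) *: k0.

(* Take the paraconvexity inequality along the segment from x0 + t0 h to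
   x0 + t h, at the point x0 + t1 h, and divide by t1 - t0: the error term
   C min(l, 1 - l) alpha(t - t0) / (t1 - t0), with l = (t1 - t0) / (t - t0),
   is at most C alpha(t - t0) / (t - t0) because min(l, 1 - l) <= l.  The
   term C alpha(t1 - t0) / (t1 - t0) added in the statement just cancels the
   one inside phi(t1). *)
From HB Require Import structures.
From mathcomp Require Import all_boot all_order all_algebra.
From mathcomp Require Import ring.
Import Order.TTheory GRing.Theory Num.Theory.
Local Open Scope ring_scope.

Section ConeOrder.
Context {R : realFieldType} {V : lmodType R} {K : V -> Prop}.
Hypotheses (convexK : convex_set K) (coneK : is_cone K) (pointedK : pointed K).

Lemma pointed_cone0 : K 0.
Proof. by have [] := (pointedK 0).2 erefl. Qed.

Lemma cone_add {a b} : K a -> K b -> K (a + b).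
Proof.
move=> Ka Kb; have two_gt0 : (0 : R) < 2 by [].
have := convexK _ _ (2^-1) (coneK _ _ two_gt0 Ka) (coneK _ _ two_gt0 Kb).
have -> : 1 - 2^-1 = 2^-1 :> R by field.
rewrite !scalerA mulVf ?pnatr_eq0 // !scale1r; apply.
by rewrite invr_ge0 ler0n invf_le1 ?ler1n.
Qed.

Lemma cone_scale_ge0 {l k} : 0 <= l -> K k -> K (l *: k).
Proof.
rewrite le_eqVlt => /orP[/eqP <- _ | l_gt0 Kk]; last exact: coneK _ _ l_gt0 Kk.
by rewrite scale0r; exact: pointed_cone0.
Qed.

Lemma cone_le_trans {x y z} : cone_le K x y -> cone_le K y z -> cone_le K x z.
Proof.
by move=> Kxy Kyz; rewrite /cone_le -(subrKA y); exact: cone_add.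
Qed.

Lemma cone_le_subr {x y} z : cone_le K x y -> cone_le K (x - z) (y - z).
Proof. by rewrite /cone_le opprB subrKA. Qed.

Lemma cone_le_scale {l x y} : 0 < l -> cone_le K x y -> cone_le K (l *: x) (l *: y).
Proof. by move=> l_gt0 Kxy; rewrite /cone_le -scalerBr; exact: coneK _ _ l_gt0 Kxy. Qed.

Lemma cone_le_addl {x y} z : cone_le K x y -> cone_le K (z + x) (z + y).
Proof. by rewrite /cone_le opprD addrACA subrr add0r. Qed.

Lemma cone_le_scale_coef {a b k} :
  a <= b -> K k -> cone_le K (a *: k) (b *: k).
Proof.
by move=> le_ab Kk; rewrite /cone_le -scalerBl; apply: cone_scale_ge0; rewrite ?subr_ge0.
Qed.

End ConeOrder.

Lemma convex_combE (R : realFieldType) (V : lmodType R) (l : R) (x y : V) :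
  l *: x + (1 - l) *: y = l *: (x - y) + y.
Proof. by rewrite scalerBl scale1r scalerBr addrA addrAC. Qed.

Lemma paraconvex_chord {R : realFieldType} {X Y : lmodType R} {N : X -> R}
    {K : Y -> Prop} {alpha : R -> R} {k0 : Y} {C : R} {A : X -> Prop}
    {F : X -> Y} {x y l} :
  strongly_paraconvex N K alpha k0 C A F -> A x -> A y -> 0 <= l <= 1 ->
  cone_le K (F (l *: (x - y) + y) - F y)
    (l *: (F x - F y) + (C * Num.min l (1 - l) * alpha (N (x - y))) *: k0).
Proof.
move=> paraF Ax Ay l01; have := cone_le_subr (F y) (paraF _ _ _ Ax Ay l01).
by rewrite !convex_combE addrAC addrK.
Qed.

Lemma line_subE (R : realFieldType) (X : lmodType R) (x0 h : X) s t :
  x0 + t *: h - (x0 + s *: h) = (t - s) *: h.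
Proof. by rewrite opprD addrACA subrr add0r scalerBl. Qed.

Lemma paraconvex_slope_le {R : realFieldType} {X Y : lmodType R} {N : X -> R}
    {K : Y -> Prop} {alpha : R -> R} {A : X -> Prop} {k0 : Y} {C : R}
    {F : X -> Y} {x0 h : X} {t0 t1 t : R} :
  is_norm N -> convex_set K -> is_cone K -> pointed K ->
  0 <= alpha (t - t0) -> K k0 -> 0 <= C ->
  strongly_paraconvex N K alpha k0 C A F -> N h = 1 ->
  t0 < t1 -> t1 < t -> A (x0 + t0 *: h) -> A (x0 + t *: h) ->
  cone_le K ((t1 - t0)^-1 *: (F (x0 + t1 *: h) - F (x0 + t0 *: h)))
    ((t - t0)^-1 *: (F (x0 + t *: h) - F (x0 + t0 *: h))
     + (C * (alpha (t - t0) / (t - t0))) *: k0).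
Proof.
move=> [_ normZ _] cK coK pK alpha_ge0 Kk0 C_ge0 paraF Nh lt01 lt1 A0 At.
have s_gt0 : 0 < t1 - t0 by rewrite subr_gt0.
have T_gt0 : 0 < t - t0 by rewrite subr_gt0 (lt_trans lt01).
pose l := (t1 - t0) / (t - t0).
have l01 : 0 <= l <= 1.
  by rewrite /l divr_ge0 ?ltW //= ltr_pdivrMr // mul1r ltrD2r.
have pointE : l *: (x0 + t *: h - (x0 + t0 *: h)) + (x0 + t0 *: h) = x0 + t1 *: h.
  by rewrite line_subE scalerA divfK ?gt_eqF // addrCA -scalerDl subrK.
have s_inv_gt0 : 0 < (t1 - t0)^-1 by rewrite invr_gt0.
have := paraconvex_chord paraF At A0 l01.
rewrite pointE line_subE normZ Nh mulr1 gtr0_norm //.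
move=> /(cone_le_scale coK s_inv_gt0) chord.
apply: (cone_le_trans cK coK chord).
rewrite scalerDr !scalerA.
have -> : (t1 - t0)^-1 * l = (t - t0)^-1 by rewrite /l mulrA mulVf ?gt_eqF ?mul1r.
apply/cone_le_addl/(cone_le_scale_coef coK pK) => //.
have -> : (t1 - t0)^-1 * (C * Num.min l (1 - l) * alpha (t - t0))
    = C * alpha (t - t0) * (Num.min l (1 - l) * (t1 - t0)^-1) by ring.
have -> : (t - t0)^-1 = l * (t1 - t0)^-1 by rewrite /l mulrAC divff ?gt_eqF ?mul1r.
rewrite mulrA ler_wpM2l ?mulr_ge0 // ler_wpM2r ?invr_ge0 ?(ltW s_gt0) //.
by rewrite ge_min lexx.
Qed.

Theorem proposition3p1 (R : realFieldType) (X Y : lmodType R) (N : X -> R)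
  (K : Y -> Prop) (alpha : R -> R) (A : X -> Prop) (k0 : Y) (C : R)
  (F : X -> Y) (x0 h : X) (t0 : R) :
  is_norm N ->
  convex_set K -> is_cone K -> pointed K ->
  (forall t, 0 <= t -> 0 <= alpha t) ->
  (forall s t, 0 <= s -> s <= t -> alpha s <= alpha t) ->
  (forall e : R, 0 < e -> exists2 d : R, 0 < d &
      forall t, 0 < t -> t < d -> `|alpha t / t| < e) ->
  convex_set A ->
  K k0 -> k0 <> 0 ->
  0 <= C ->
  strongly_paraconvex N K alpha k0 C A F ->
  A x0 -> N h = 1 ->
  forall t1 t, t0 < t1 -> t1 < t ->
    A (x0 + t0 *: h) -> A (x0 + t *: h) ->
    K (phi alpha k0 C F x0 h t0 t - phi alpha k0 C F x0 h t0 t1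
       + (C * (alpha (t1 - t0) / (t1 - t0))) *: k0).
Proof.
move=> normN cK coK pK alpha_ge0 _ _ _ Kk0 _ C_ge0 paraF _ Nh t1 t lt01 lt1 A0 At.
have T_ge0 : 0 <= t - t0 by rewrite subr_ge0 ltW // (lt_trans lt01).
have := paraconvex_slope_le normN cK coK pK (alpha_ge0 _ T_ge0) Kk0 C_ge0 paraF
  Nh lt01 lt1 A0 At.
by rewrite /cone_le /phi opprD addrA subrK.
Qed.
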